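(* Let $G$ be a group and $S$ a conjugation invariant generating set of $G$. Suppose $G$ has $m$ linearly independent homogeneous quasi-morphisms each of which is bounded on $S$. Then there is a quasi-isometric embedding of $\mathbb{Z}^m$ into the quotient graph $\mathrm{Cay}(G,S)/\mathrm{Inn}(G)$.
   Context: A quasi-morphism is a function $q:G\to\mathbb{R}$ with $\sup_{g,h}|q(gh)-q(g)-q(h)|<\infty$; it is homogeneous if $q(g^k)=kq(g)$ for all $g$ and $k\in\mathbb Z$. $\mathrm{Cay}(G,S)$ is the graph with vertex set $G$ and an undirected edge between $g$ and $sg$ for $g\in G$, $s\in S$. Since $S$ is conjugation invariant, $G$ acts on $\mathrm{Cay}(G,S)$ by graph automorphisms via conjugation $g\mapsto kgk^{-1}$. The quotient graph $\mathrm{Cay}(G,S)/\mathrm{Inn}(G)$ has as vertices the conjugacy classes of $G$, two classes being joined by an edge iff they have representatives joined by an edge in $\mathrm{Cay}(G,S)$; it carries the path metric with edges of length $1$. $\mathbb Z^m$ carries the $\ell^1$ metric. *)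

From mathcomp Require Import all_boot all_order all_algebra.
From mathcomp Require Import Rstruct.
Set Implicit Arguments. Unset Strict Implicit. Unset Printing Implicit Defensive.
Import Order.TTheory GRing.Theory Num.Theory.
Local Open Scope ring_scope.

Notation R := Rdefinitions.R.

Record group_axioms (G : Type) (mul : G -> G -> G) (inv : G -> G) (e : G) : Prop :=
  { gassoc : forall x y z, mul x (mul y z) = mul (mul x y) z;
    gid_l  : forall x, mul e x = x;
    ginv_l : forall x, mul (inv x) x = e }.

Section GroupDefs.
Variables (G : Type) (mul : G -> G -> G) (inv : G -> G) (e : G).

Definition gpow (g : G) (k : int) : G :=
  match k with
  | Posz n => iter n (mul g) e
  | Negz n => iter n.+1 (mul (inv g)) e
  end.

Definition conj_invariant (S : G -> Prop) : Prop :=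
  forall s k, S s -> S (mul (mul k s) (inv k)).

Inductive generated (S : G -> Prop) : G -> Prop :=
  | gen_e : generated S e
  | gen_l : forall s g, S s -> generated S g -> generated S (mul s g)
  | gen_li : forall s g, S s -> generated S g -> generated S (mul (inv s) g).

Definition generating_set (S : G -> Prop) : Prop := forall g, generated S g.

Definition quasi_morphism (q : G -> R) : Prop :=
  exists D : R, forall g h, `|q (mul g h) - q g - q h| <= D.

Definition homogeneous (q : G -> R) : Prop :=
  forall g (k : int), q (gpow g k) = k%:~R * q g.

Definition bounded_on (S : G -> Prop) (q : G -> R) : Prop :=
  exists B : R, forall s, S s -> `|q s| <= B.

Definition lin_indep (m : nat) (q : 'I_m -> G -> R) : Prop :=
  forall c : 'I_m -> R, (forall g, \sum_(i < m) c i * q i g = 0) -> forall i, c i = 0.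

Definition conj_class (g : G) : G -> Prop :=
  fun x => exists k, x = mul (mul k g) (inv k).

(* vertices of Cay(G,S)/Inn(G): the conjugacy classes of G *)
Definition cvertex : Type := { P : G -> Prop | exists g, P = conj_class g }.

(* edge of the quotient graph: representatives joined by an edge g -- s g of Cay(G,S) *)
Definition cedge (S : G -> Prop) (P Q : cvertex) : Prop :=
  exists g h s, proj1_sig P g /\ proj1_sig Q h /\ S s /\
                (h = mul s g \/ g = mul s h).

Inductive cwalk (S : G -> Prop) : cvertex -> cvertex -> nat -> Prop :=
  | cwalk0 : forall P, cwalk S P P 0
  | cwalkS : forall P Q T n, cedge S P Q -> cwalk S Q T n -> cwalk S P T n.+1.

Definition dZ (m : nat) (x y : 'I_m -> int) : R :=
  \sum_(i < m) `|x i - y i|%:~R.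

(* The path-metric distance
   d(P,Q) = min length of a walk from P to Q is expressed through walks:
   "d >= a"  <->  every walk has length >= a,
   "d <= b"  <->  some walk has length <= b. *)
Definition qi_embedding (S : G -> Prop) (m : nat) (f : ('I_m -> int) -> cvertex) : Prop :=
  exists K C : R, 1 <= K /\ 0 <= C /\
    forall x y,
      (forall n, cwalk S (f x) (f y) n -> dZ x y / K - C <= n%:R) /\
      (exists n, cwalk S (f x) (f y) n /\ n%:R <= K * dZ x y + C).

End GroupDefs.

From mathcomp Require Import all_boot all_order all_algebra.
From mathcomp Require Import Rstruct.
From mathcomp Require Import zify ring lra.
From Stdlib Require Import FunctionalExtensionality PropExtensionality ProofIrrelevance.
From Stdlib Require Import Classical IndefiniteDescription.
Set Implicit Arguments. Unset Strict Implicit. Unset Printing Implicit Defensive.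
Import Order.TTheory GRing.Theory Num.Theory.
Local Open Scope ring_scope.

(** Choose g_1, ..., g_m with the matrix (q_i(g_j)) invertible, which linear
   independence allows, and send x in Z^m to the conjugacy class of
   g_1^x_1 ... g_m^x_m.  Each g_j is a word in S, and the class of a product
   is invariant under cyclic rotation of the factors, so changing one
   coordinate x_j by one moves the image a bounded distance: the map is
   Lipschitz.  Conversely, homogeneous quasi-morphisms are conjugation
   invariant, so each q_i is a function on vertices that changes by a bounded
   amount along every edge; since q_i of the image of x is (x A)_i up to a
   bounded error, inverting A bounds |x - y|_1 linearly by the distance of
   the images. *)

Section Group.
Variables (G : Type) (mul : G -> G -> G) (inv : G -> G) (e : G).
Hypothesis HG : group_axioms mul inv e.

Local Notation gpow := (gpow mul inv e).

Lemma gmulA x y z : mul x (mul y z) = mul (mul x y) z.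
Proof. exact: gassoc HG x y z. Qed.

Lemma gmul1l x : mul e x = x.
Proof. exact: gid_l HG x. Qed.

Lemma gmulVl x : mul (inv x) x = e.
Proof. exact: ginv_l HG x. Qed.

Lemma gmulI x y z : mul x y = mul x z -> y = z.
Proof.
by move=> E; rewrite -(gmul1l y) -(gmulVl x) -gmulA E gmulA gmulVl gmul1l.
Qed.

Lemma gmulVr x : mul x (inv x) = e.
Proof.
have idem : mul (mul x (inv x)) (mul x (inv x)) = mul x (inv x).
  by rewrite -gmulA (gmulA (inv x)) gmulVl gmul1l.
by rewrite -(gmulVl (mul x (inv x))) -{3}idem gmulA gmulVl gmul1l.
Qed.

Lemma gmul1r x : mul x e = x.
Proof. by rewrite -(gmulVl x) gmulA gmulVr gmul1l. Qed.

Lemma ginvK x : inv (inv x) = x.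
Proof. by rewrite -(gmul1r (inv (inv x))) -(gmulVl x) gmulA gmulVl gmul1l. Qed.

Lemma ginv1 : inv e = e.
Proof. by rewrite -{2}(gmulVl e) gmul1r. Qed.

Lemma ginvM a b : inv (mul a b) = mul (inv b) (inv a).
Proof.
apply: (@gmulI (mul a b)).
by rewrite gmulVr -gmulA (gmulA b) gmulVr gmul1l gmulVr.
Qed.

Lemma gpowSl g (k : int) : gpow g (k + 1) = mul g (gpow g k).
Proof.
case: k => [n|[|n]]; first by rewrite -PoszD addn1.
  by rewrite /= gmul1r gmulVr.
have -> : Negz n.+1 + 1 = Negz n by rewrite !NegzE; lia.
by rewrite /= gmulA gmulVr gmul1l.
Qed.

Lemma gpow0 g : gpow g 0 = e.
Proof. by []. Qed.

Lemma gpowN1 g : gpow g (-1) = inv g.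
Proof. by rewrite /= gmul1r. Qed.

Lemma gpow_conj k g (n : nat) :
  gpow (mul (mul k g) (inv k)) n = mul (mul k (gpow g n)) (inv k).
Proof.
elim: n => [|n IH] /=; first by rewrite gmul1r gmulVr.
rewrite /= in IH; rewrite IH.
by rewrite -!gmulA (gmulA (inv k)) gmulVl gmul1l.
Qed.

Definition cls (g : G) : cvertex mul inv :=
  exist _ (conj_class mul inv g) (ex_intro _ g erefl).

Lemma cvertex_val_inj (P Q : cvertex mul inv) : proj1_sig P = proj1_sig Q -> P = Q.
Proof.
case: P Q => [P HP] [Q HQ] /= E; subst Q.
by rewrite (proof_irrelevance _ HP HQ).
Qed.

Lemma cls_conj k g : cls (mul (mul k g) (inv k)) = cls g.
Proof.
apply: cvertex_val_inj; apply: functional_extensionality => x /=.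
apply: propositional_extensionality; split=> -[j ->].
  by exists (mul j k); rewrite ginvM !gmulA.
exists (mul j (inv k)); rewrite ginvM ginvK.
by rewrite -!gmulA (gmulA (inv k)) gmulVl gmul1l (gmulA (inv k)) gmulVl gmul1l.
Qed.

Lemma cls_mulC a c : cls (mul a c) = cls (mul c a).
Proof. by rewrite -(cls_conj c (mul a c)) -!gmulA gmulVr gmul1r. Qed.

Lemma mem_cls g : proj1_sig (cls g) g.
Proof. by exists e; rewrite gmul1l ginv1 gmul1r. Qed.

Lemma cvertex_nonempty (P : cvertex mul inv) : exists g, proj1_sig P g.
Proof. by case: P => P [g E]; exists g; rewrite /= E; exact: mem_cls. Qed.

Variable S : G -> Prop.

Lemma cedge_sym (P Q : cvertex mul inv) : cedge S P Q -> cedge S Q P.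
Proof.
by move=> [g [h [s [Pg [Qh [Ss E]]]]]]; exists h, g, s; do 3!split=> //; case: E; auto.
Qed.

Lemma cedge_mul s w : S s -> cedge S (cls (mul s w)) (cls w).
Proof.
move=> Ss; exists (mul s w), w, s.
by do 2!(split; first exact: mem_cls); split=> //; right.
Qed.

Lemma cwalk_cat (P Q T : cvertex mul inv) n k :
  cwalk S P Q n -> cwalk S Q T k -> cwalk S P T (n + k).
Proof.
elim=> [//|P0 Q0 T0 n0 E _ IH] W.
by rewrite addSn; exact: cwalkS E (IH W).
Qed.

Lemma cwalk_sym (P Q : cvertex mul inv) n : cwalk S P Q n -> cwalk S Q P n.
Proof.
elim=> [P0|P0 Q0 T0 n0 E _ IH]; first exact: cwalk0.
rewrite -addn1; apply: cwalk_cat IH _.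
exact: cwalkS (cedge_sym E) (cwalk0 _ _).
Qed.

Lemma generated_cwalk t : generated mul inv e S t ->
  exists n, forall u, cwalk S (cls (mul t u)) (cls u) n.
Proof.
elim=> [|s t' Ss _ [n IH]|s t' Ss _ [n IH]].
- by exists 0%N => u; rewrite gmul1l; exact: cwalk0.
- exists n.+1 => u; rewrite -gmulA.
  exact: cwalkS (cedge_mul _ Ss) (IH u).
- exists n.+1 => u; rewrite -gmulA.
  apply: cwalkS (IH u); apply: cedge_sym.
  by have := cedge_mul (mul (inv s) (mul t' u)) Ss; rewrite gmulA gmulVr gmul1l.
Qed.

Lemma cwalk_chain (V : int -> cvertex mul inv) l :
  (forall k, cwalk S (V k) (V (k + 1)) l) ->
  forall k (d : nat), cwalk S (V k) (V (k + d%:Z)) (d * l).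
Proof.
move=> step k d; elim: d k => [|d IH] k; first by rewrite addr0; exact: cwalk0.
have -> : k + d.+1%:Z = (k + 1) + d%:Z by lia.
by rewrite mulSn; exact: cwalk_cat (step k) (IH _).
Qed.

Lemma gpow_cwalk g : generated mul inv e S g -> exists L : nat,
  forall (k k' : int) u,
    cwalk S (cls (mul (gpow g k) u)) (cls (mul (gpow g k') u)) (L * `|k - k'|).
Proof.
move=> /generated_cwalk [L HL]; exists L => k k' u.
have step j : cwalk S (cls (mul (gpow g j) u)) (cls (mul (gpow g (j + 1)) u)) L.
  by apply: cwalk_sym; rewrite gpowSl -gmulA; exact: HL.
wlog le_kk' : k k' / k <= k'.
  move=> W; have [/W //|/ltW lt_k'k] := lerP k k'.
  by apply: cwalk_sym; rewrite -abszN opprB; exact: W.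
have Ek' : k' = k + (`|k' - k|%N)%:Z by lia.
have := cwalk_chain step k `|k' - k|.
by rewrite -Ek' mulnC -abszN opprB.
Qed.

Definition prodg m (gs : 'I_m -> G) (x : 'I_m -> int) (l : seq 'I_m) : G :=
  foldr (fun j acc => mul (gpow (gs j) (x j)) acc) e l.

Lemma prodg_cons m (gs : 'I_m -> G) x j l :
  prodg gs x (j :: l) = mul (gpow (gs j) (x j)) (prodg gs x l).
Proof. by []. Qed.

Lemma prodg_cwalk m (gs : 'I_m -> G) (L : 'I_m -> nat) :
  (forall j (k k' : int) u,
     cwalk S (cls (mul (gpow (gs j) k) u)) (cls (mul (gpow (gs j) k') u)) (L j * `|k - k'|)) ->
  forall l x y w,
    cwalk S (cls (mul (prodg gs x l) w)) (cls (mul (prodg gs y l) w))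
      (\sum_(j <- l) L j * `|x j - y j|).
Proof.
move=> HL; elim=> [|j l IH] x y w; first by rewrite big_nil; exact: cwalk0.
rewrite big_cons addnC !prodg_cons -!gmulA.
apply: cwalk_cat (HL j (x j) (y j) _).
(* Conjugacy classes are invariant under rotation, so gs_j^(x_j) moves behind w. *)
by rewrite !(cls_mulC (gpow (gs j) (x j))) -!gmulA; exact: IH.
Qed.

End Group.

Lemma natmul_bounded_eq0 (F : archiRealFieldType) (a C : F) :
  (forall n : nat, `|n%:R * a| <= C) -> a = 0.
Proof.
move=> bounded; apply/eqP/negPn/negP => a_neq0.
have C_ge0 : 0 <= C by apply: le_trans (bounded 0%N); exact: normr_ge0.
have a_gt0 : 0 < `|a| by rewrite normr_gt0.
have := archi_boundP (divr_ge0 C_ge0 (ltW a_gt0)).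
rewrite ltr_pdivrMr // => lt_C.
by have := bounded (Num.Def.archi_bound (C / `|a|)); rewrite normrM normr_nat leNgt lt_C.
Qed.

Section HomogeneousQuasiMorphism.
Variables (G : Type) (mul : G -> G -> G) (inv : G -> G) (e : G).
Hypothesis HG : group_axioms mul inv e.
Variables (q : G -> R) (D : R).
Hypothesis q_defect : forall g h, `|q (mul g h) - q g - q h| <= D.
Hypothesis q_homog : homogeneous mul inv e q.

Lemma hqm1 : q e = 0.
Proof. by have := q_homog e 0; rewrite gpow0 mul0r. Qed.

Lemma hqmV g : q (inv g) = - q g.
Proof. by have := q_homog g (-1); rewrite (gpowN1 HG) mulN1r. Qed.

(* n |q(k g k^-1) - q(g)| = |q(k g^n k^-1) - q(g^n)| <= 2D for every n. *)
Lemma hqm_conj k g : q (mul (mul k g) (inv k)) = q g.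
Proof.
apply/eqP; rewrite -subr_eq0; apply/eqP.
apply: (@natmul_bounded_eq0 _ _ (D + D)) => n.
have qc := q_homog (mul (mul k g) (inv k)) n.
have qg := q_homog g n.
rewrite (gpow_conj HG) in qc.
have d1 := q_defect (mul k (gpow mul inv e g n)) (inv k).
have d2 := q_defect k (gpow mul inv e g n).
rewrite qc hqmV in d1; rewrite qg in d2.
rewrite mulrBr -[n%:R]/((n%:Z)%:~R).
set a := q (mul k _) in d1 d2 *.
set X := _ * q (mul (mul k g) (inv k)) in d1 *.
set Y := _ * q g in d1 d2 *.
have -> : X - Y = (X - a - - q k) + (a - q k - Y) by ring.
by apply: le_trans (ler_normD _ _) _; exact: lerD.
Qed.

Lemma hqm_cvertex (P : cvertex mul inv) a b :
  proj1_sig P a -> proj1_sig P b -> q a = q b.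
Proof. by case: P => P [g0 E] /=; rewrite E => -[k ->] [k' ->]; rewrite !hqm_conj. Qed.

Lemma hqm_prodg m (gs : 'I_m -> G) (x : 'I_m -> int) l :
  `|q (prodg mul inv e gs x l) - \sum_(j <- l) (x j)%:~R * q (gs j)| <= (size l)%:R * D.
Proof.
elim: l => [|j l IH]; first by rewrite big_nil hqm1 subrr normr0 mul0r.
rewrite prodg_cons big_cons -q_homog /=.
set a := gpow mul inv e _ _; set b := prodg _ _ _ _ _ _; set s := \sum_(i <- l) _.
have -> : q (mul a b) - (q a + s) = (q (mul a b) - q a - q b) + (q b - s) by ring.
by apply: le_trans (ler_normD _ _) _; rewrite mulrSr mulrDl mul1r addrC; exact: lerD.
Qed.

Variables (S : G -> Prop) (B : R).
Hypothesis q_bounded : forall s, S s -> `|q s| <= B.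

Lemma hqm_cedge (P Q : cvertex mul inv) a b : cedge S P Q ->
  proj1_sig P a -> proj1_sig Q b -> `|q a - q b| <= D + B.
Proof.
move=> [g [h [s [Pg [Qh [Ss E]]]]]] Pa Qb.
rewrite (hqm_cvertex Pa Pg) (hqm_cvertex Qb Qh).
have ds := q_bounded Ss.
case: E => -> {a b Pa Qb Pg Qh}.
  have dsg := q_defect s g.
  have -> : q g - q (mul s g) = - (q (mul s g) - q s - q g) - q s by ring.
  by apply: le_trans (ler_normB _ _) _; rewrite normrN; exact: lerD.
have dsh := q_defect s h.
have -> : q (mul s h) - q h = (q (mul s h) - q s - q h) + q s by ring.
by apply: le_trans (ler_normD _ _) _; exact: lerD.
Qed.

Lemma hqm_cwalk (P Q : cvertex mul inv) n a b : cwalk S P Q n ->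
  proj1_sig P a -> proj1_sig Q b -> `|q a - q b| <= n%:R * (D + B).
Proof.
move=> W; elim: W a b => [P0|P0 Q0 T0 n0 E W IH] a b Pa Qb.
  by rewrite (hqm_cvertex Pa Qb) subrr normr0 mul0r.
have [c Q0c] := cvertex_nonempty HG Q0.
have -> : q a - q b = (q a - q c) + (q c - q b) by ring.
apply: le_trans (ler_normD _ _) _; rewrite mulrSr mulrDl mul1r [in X in _ <= X]addrC.
exact: lerD (hqm_cedge E Pa Q0c) (IH _ _ Q0c Qb).
Qed.

End HomogeneousQuasiMorphism.

Section Norm1.
Variable F : numDomainType.

Definition norm1 n (z : 'rV[F]_n) : F := \sum_i `|z 0 i|.

Definition mxnorm1 n p (A : 'M[F]_(n, p)) : F := \sum_j \sum_i `|A j i|.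

Lemma mxnorm1_ge0 n p (A : 'M[F]_(n, p)) : 0 <= mxnorm1 A.
Proof. by apply: sumr_ge0 => j _; apply: sumr_ge0 => i _; exact: normr_ge0. Qed.

Lemma norm1_mulmx n p (z : 'rV[F]_n) (A : 'M[F]_(n, p)) :
  norm1 (z *m A) <= mxnorm1 A * norm1 z.
Proof.
apply: le_trans (_ : \sum_i \sum_j `|z 0 j| * `|A j i| <= _).
  apply: ler_sum => i _; rewrite mxE; apply: le_trans (ler_norm_sum _ _ _) _.
  by apply: ler_sum => j _; rewrite normrM.
rewrite exchange_big /= /norm1 mulr_sumr; apply: ler_sum => j _.
rewrite -mulr_sumr mulrC; apply: ler_wpM2r; first exact: normr_ge0.
rewrite /mxnorm1 (bigD1 j) //= lerDl.
by apply: sumr_ge0 => k _; apply: sumr_ge0 => i _; exact: normr_ge0.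
Qed.

End Norm1.

Section QuasiMorphismBasis.
Variables (G : Type) (m : nat) (q : 'I_m -> G -> R).
Hypothesis q_indep : lin_indep q.

Definition qrow (g : G) : 'rV[R]_m := \row_i q i g.

Definition qmx k (gs : 'I_k -> G) : 'M[R]_(k, m) := \matrix_(j, i) q i (gs j).

(* A column of [cokermx M] vanishing on every [qrow g] is a linear relation
   among the q_i. *)
Lemma qrow_notin_rowspace k (M : 'M[R]_(k, m)) : (k < m)%N ->
  exists h, ~~ (qrow h <= M)%MS.
Proof.
move=> lt_km; apply: NNPP => no_h.
have sub g : (qrow g <= M)%MS by apply/negPn/negP => nsub; apply: no_h; exists g.
have coker0 : cokermx M = 0.
  apply/matrixP => i j; rewrite [RHS]mxE.
  apply: (q_indep (c := fun i => cokermx M i j)) => g.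
  have := sub g; rewrite submxE => /eqP/matrixP/(_ 0 j); rewrite !mxE => E.
  by rewrite -[RHS]E; apply: eq_bigr => i' _; rewrite !mxE mulrC.
have : row_full M by rewrite -cokermx_eq0 coker0.
by rewrite /row_full => /eqP full; have := rank_leq_row M; rewrite full leqNgt lt_km.
Qed.

Lemma qmx_rank k : (k <= m)%N -> G -> exists gs : 'I_k -> G, \rank (qmx gs) = k.
Proof.
elim: k => [|k IH] le_km g0.
  by exists (fun _ => g0); apply/eqP; rewrite -leqn0 rank_leq_row.
have [gs rk_gs] := IH (ltnW le_km) g0.
have [h nsub] := qrow_notin_rowspace (qmx gs) le_km.
pose gs' j := if unlift ord_max j is Some j' then gs j' else h.
exists gs'.
have sub_gs : (qmx gs <= qmx gs')%MS.
  apply/row_subP => j.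
  have -> : row j (qmx gs) = row (lift ord_max j) (qmx gs').
    by apply/rowP => i; rewrite !mxE /gs' liftK.
  exact: row_sub.
have sub_h : (qrow h <= qmx gs')%MS.
  have -> : qrow h = row ord_max (qmx gs').
    by apply/rowP => i; rewrite !mxE /gs' unlift_none.
  exact: row_sub.
have lt_gs : (qmx gs < qmx gs')%MS.
  rewrite ltmxE sub_gs /=; apply: contra nsub => sub_gs'.
  exact: submx_trans sub_h sub_gs'.
apply/eqP; rewrite eqn_leq rank_leq_row /=.
by have := rank_ltmx lt_gs; rewrite rk_gs.
Qed.

Lemma qmx_unit : G -> exists gs : 'I_m -> G, qmx gs \in unitmx.
Proof.
move=> g0; have [gs rk_gs] := qmx_rank (leqnn m) g0.
by exists gs; rewrite -row_free_unit /row_free rk_gs.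
Qed.

End QuasiMorphismBasis.

Lemma qi_embedding_of_bounds (G : Type) (mul : G -> G -> G) (inv : G -> G)
    (S : G -> Prop) (m : nat) (f : ('I_m -> int) -> cvertex mul inv) (a b c : R) :
  (forall x y n, cwalk S (f x) (f y) n -> dZ x y <= a * n%:R + b) ->
  (forall x y, exists n, cwalk S (f x) (f y) n /\ n%:R <= c * dZ x y) ->
  qi_embedding S f.
Proof.
move=> lower upper.
have a_le := ler_norm a; have b_le := ler_norm b; have c_le := ler_norm c.
have a_ge0 := normr_ge0 a; have b_ge0 := normr_ge0 b; have c_ge0 := normr_ge0 c.
exists (1 + `|a| + `|c|), `|b|; split; [lra|split; [lra|]] => x y.
have dZ_ge0 : 0 <= dZ x y by apply: sumr_ge0 => i _; rewrite ler0z.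
split=> [n /lower le_dZ | ].
  have n_ge0 : 0 <= (n%:R : R) := ler0n _ n.
  rewrite lerBlDr ler_pdivrMr; last by lra.
  nra.
have [n [W le_n]] := upper x y; exists n; split=> //; nra.
Qed.

Section Embedding.
Variables (G : Type) (mul : G -> G -> G) (inv : G -> G) (e : G).
Hypothesis HG : group_axioms mul inv e.
Variables (S : G -> Prop) (m : nat) (gs : 'I_m -> G).

Definition embed (x : 'I_m -> int) : cvertex mul inv :=
  cls mul inv (prodg mul inv e gs x (index_enum 'I_m)).

Lemma embed_upper : (forall j, generated mul inv e S (gs j)) -> exists L : nat,
  forall x y, exists n, cwalk S (embed x) (embed y) n /\ n%:R <= L%:R * dZ x y.
Proof.
move=> gs_gen; have [L HL] := functional_choice _ (fun j => gpow_cwalk HG (gs_gen j)).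
exists (\sum_j L j)%N => x y.
have := prodg_cwalk HG HL (index_enum 'I_m) x y e; rewrite !(gmul1r HG) => W.
exists (\sum_j L j * `|x j - y j|)%N; split=> //.
rewrite natr_sum /dZ mulr_sumr; apply: ler_sum => j _.
rewrite -natr_absz -natrM ler_nat leq_mul //.
by rewrite (bigD1 j) //= leq_addr.
Qed.

Variables (q : 'I_m -> G -> R) (D B : 'I_m -> R).
Hypothesis q_defect : forall i g h, `|q i (mul g h) - q i g - q i h| <= D i.
Hypothesis q_homog : forall i, homogeneous mul inv e (q i).
Hypothesis q_bounded : forall i s, S s -> `|q i s| <= B i.
Hypothesis gs_basis : qmx q gs \in unitmx.

Definition zrow (x : 'I_m -> int) : 'rV[R]_m := \row_j (x j)%:~R.

Lemma dZ_norm1 x y : dZ x y = norm1 (zrow x - zrow y).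
Proof. by apply: eq_bigr => j _; rewrite !mxE intr_norm rmorphB. Qed.

Lemma hqm_embed i x :
  `|q i (prodg mul inv e gs x (index_enum 'I_m)) - (zrow x *m qmx q gs) 0 i|
    <= m%:R * D i.
Proof.
have -> : (zrow x *m qmx q gs) 0 i = \sum_j (x j)%:~R * q i (gs j).
  by rewrite mxE; apply: eq_bigr => j _; rewrite !mxE.
have := hqm_prodg (q_defect i) (q_homog i) gs x (index_enum 'I_m).
by rewrite [index_enum 'I_m]unlock -enumT size_enum_ord.
Qed.

Lemma embed_lower x y n : cwalk S (embed x) (embed y) n ->
  dZ x y <= mxnorm1 (invmx (qmx q gs)) * (\sum_i (D i + B i)) * n%:R
            + mxnorm1 (invmx (qmx q gs)) * (2 * m%:R * \sum_i D i).
Proof.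
move=> W; set z := zrow x - zrow y.
pose Px := prodg mul inv e gs x (index_enum 'I_m).
pose Py := prodg mul inv e gs y (index_enum 'I_m).
have zA i : `|(z *m qmx q gs) 0 i| <= n%:R * (D i + B i) + 2 * m%:R * D i.
  have walk := hqm_cwalk HG (q_defect i) (q_homog i) (q_bounded i) W
                 (mem_cls HG Px) (mem_cls HG Py).
  have ex := hqm_embed i x; have ey := hqm_embed i y.
  rewrite -/Px -/Py in ex ey.
  have -> : (z *m qmx q gs) 0 i =
      (q i Px - q i Py) - (q i Px - (zrow x *m qmx q gs) 0 i)
      + (q i Py - (zrow y *m qmx q gs) 0 i).
    by rewrite /z mulmxBl !mxE; ring.
  set u := q i Px - q i Py in walk *; set v := q i Px - _ in ex *.
  set w := q i Py - _ in ey *.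
  have := ler_normD (u - v) w; have := ler_normB u v; lra.
have zA_norm :
    norm1 (z *m qmx q gs) <= (\sum_i (D i + B i)) * n%:R + 2 * m%:R * \sum_i D i.
  rewrite /norm1 mulr_suml mulr_sumr -big_split /=; apply: ler_sum => i _.
  by rewrite [_ * n%:R]mulrC; exact: zA i.
rewrite dZ_norm1 -/z -[z](mulmxK gs_basis) -mulrA -mulrDr.
apply: le_trans (norm1_mulmx _ _) _.
by rewrite ler_wpM2l // mxnorm1_ge0.
Qed.

End Embedding.

Unset Implicit Arguments.

Theorem mainTheorem3 (G : Type) (mul : G -> G -> G) (inv : G -> G) (e : G)
  (HG : group_axioms mul inv e) (S : G -> Prop)
  (HSconj : conj_invariant mul inv S) (HSgen : generating_set mul inv e S)
  (m : nat) (q : 'I_m -> G -> Rdefinitions.R)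
  (Hqm : forall i, quasi_morphism mul (q i))
  (Hhom : forall i, homogeneous mul inv e (q i))
  (Hbdd : forall i, bounded_on S (q i))
  (Hind : lin_indep q) :
  exists f : ('I_m -> int) -> cvertex mul inv, qi_embedding S f.
Proof.
have [gs gs_basis] := qmx_unit Hind e.
have [D q_defect] := functional_choice _ Hqm.
have [B q_bounded] := functional_choice _ Hbdd.
have [L upper] := embed_upper HG (fun j => HSgen (gs j)).
exists (embed mul inv e gs).
exact: qi_embedding_of_bounds (embed_lower HG q_defect Hhom q_bounded gs_basis) upper.
Qed.
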